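(* Let $A$ be a square matrix. If some principal submatrix $A[\kappa]$ of $A$ is Hurwitz-stable but is not a $P^-_0$ matrix, then $A$ is $D$-Hopf.
   Context: A square matrix is Hurwitz-stable if all its eigenvalues have negative real part and Hurwitz-unstable if at least one eigenvalue has positive real part. A matrix is a $P^-_0$ matrix if every nonzero $k\times k$ principal minor has sign $(-1)^k$ (for all $k$). Inertia: numbers of eigenvalues with negative, positive, zero real part. $A[\kappa]$ is the principal submatrix indexed by $\kappa$. $A$ is $D$-Hopf if there exist an invertible $k\times k$ principal submatrix $A[\kappa]$ and positive diagonal $D_1,D_2$ with $\operatorname{inertia}(A[\kappa]D_1)\ne\operatorname{inertia}(A[\kappa]D_2)$. *)

From HB Require Import structures.
From mathcomp Require Import all_boot all_order all_algebra.
From mathcomp Require Import closed_field complex.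
Set Implicit Arguments. Unset Strict Implicit. Unset Printing Implicit Defensive.
Import Order.TTheory GRing.Theory Num.Theory.
Local Open Scope ring_scope.

Section Defs.
Variable R : rcfType.

Definition cmx (n : nat) (M : 'M[R]_n) : 'M[R[i]]_n := map_mx (real_complex R) M.

Definition eigenvalue_of (n : nat) (M : 'M[R]_n) (z : R[i]) : bool :=
  root (char_poly (cmx M)) z.

(* list of eigenvalues with algebraic multiplicity *)
Definition eigenseq (n : nat) (M : 'M[R]_n) : seq R[i] :=
  sval (closed_field_poly_normal (char_poly (cmx M))).

Definition inertia (n : nat) (M : 'M[R]_n) : nat * nat * nat :=
  (count (fun z => Re z < 0) (eigenseq M),
   count (fun z => 0 < Re z) (eigenseq M),
   count (fun z => Re z == 0) (eigenseq M)).

Definition hurwitz_stable (n : nat) (M : 'M[R]_n) : Prop :=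
  forall z, eigenvalue_of M z -> Re z < 0.

Definition psubmx (n : nat) (A : 'M[R]_n) (kappa : {set 'I_n}) : 'M[R]_#|kappa| :=
  \matrix_(i < #|kappa|, j < #|kappa|) A (enum_val i) (enum_val j).

Definition P0minus (m : nat) (M : 'M[R]_m) : Prop :=
  forall alpha : {set 'I_m}, \det (psubmx M alpha) != 0 ->
    Num.sg (\det (psubmx M alpha)) = (-1) ^+ #|alpha|.

Definition pos_diag (k : nat) (D : 'M[R]_k) : Prop :=
  exists d : 'rV[R]_k, D = diag_mx d /\ forall j, 0 < d 0 j.

Definition D_Hopf (n : nat) (A : 'M[R]_n) : Prop :=
  exists kappa : {set 'I_n}, psubmx A kappa \in unitmx /\
    exists D1 D2 : 'M[R]_#|kappa|, pos_diag D1 /\ pos_diag D2 /\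
      inertia (psubmx A kappa *m D1) <> inertia (psubmx A kappa *m D2).
End Defs.

From HB Require Import structures.
From mathcomp Require Import all_boot all_order all_algebra.
From mathcomp Require Import closed_field complex.
From mathcomp Require Import fingroup perm polyrcf lra.
From Stdlib Require Import Classical_Prop.
Set Implicit Arguments. Unset Strict Implicit. Unset Printing Implicit Defensive.
Import Order.TTheory GRing.Theory Num.Theory.
Local Open Scope ring_scope.

(** Let [B = A[kappa]] be Hurwitz-stable and [B[alpha]] a principal submatrix
    whose minor has the wrong sign, i.e. [char_poly B[alpha]] is negative at
    [0], hence also at some [x > 0].  Scale the columns of [B] outside [alpha]
    by [e >= 0]: [det (x - B D_e)] is a polynomial in [e] whose value at
    [e = 0] is [x ^ (k - |alpha|) * char_poly B[alpha] (x) < 0], so it stays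
    negative for some small [e > 0].  Then the monic polynomial
    [char_poly (B D_e)] is negative at [x > 0], so [B D_e] has a positive real
    eigenvalue, while [B D_1 = B] is stable: the two inertias differ. *)

Lemma det_mxsub_perm (R : comNzRingType) m k (eq_mk : m = k)
    (f : 'I_m -> 'I_k) (f_inj : injective f) (M : 'M[R]_k) :
  \det (mxsub f f M) = \det M.
Proof.
subst k; pose s := perm f_inj.
have -> : mxsub f f M = row_perm s (col_perm s M).
  by apply/matrixP => i j; rewrite !mxE !permE.
rewrite row_permE col_permE !det_mulmx !det_perm odd_permV.
by rewrite mulrCA -expr2 sqrr_sign mulr1.
Qed.

Lemma horner_det (R : comNzRingType) k (P : 'M[{poly R}]_k) (x : R) :
  (\det P).[x] = \det (map_mx (horner_eval x) P).
Proof. by rewrite det_map_mx. Qed.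

Lemma horner_char_poly (R : comNzRingType) k (M : 'M[R]_k) (x : R) :
  (char_poly M).[x] = \det (x%:M - M).
Proof.
rewrite /char_poly horner_det; congr (\det _); apply/matrixP => i j.
by rewrite !mxE /= horner_evalE hornerD hornerN hornerMn hornerX hornerC.
Qed.

Lemma poly_lt0_right (R : rcfType) (q : {poly R}) :
  q.[0] < 0 -> exists2 e, 0 < e & q.[e] < 0.
Proof.
move=> q0_lt0; have mq0_gt0 : 0 < - q.[0] by rewrite oppr_gt0.
have [d d_gt0 near0] := poly_cont 0 q mq0_gt0.
have d2_gt0 : 0 < d / 2 by rewrite divr_gt0.
exists (d / 2) => //.
have : `|d / 2 - 0| < d.
  by rewrite subr0 ger0_norm ?ltW // ltr_pdivrMr // ltr_pMr // ltr1n.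
move/near0; have := ler_norm (q.[d / 2] - q.[0]); lra.
Qed.

Lemma signr_mulr_lt0 (R : realDomainType) (d : R) (m : nat) :
  d != 0 -> Num.sg d != (-1) ^+ m -> (-1) ^+ m * d < 0.
Proof.
rewrite -signr_odd; case: (odd m); rewrite ?expr0 ?expr1 ?mul1r ?mulN1r ?oppr_lt0;
  case: (ltgtP d 0) => // d_cmp _; by rewrite ?(ltr0_sg d_cmp) ?(gtr0_sg d_cmp) eqxx.
Qed.

Section Eigenvalues.
Variable R : rcfType.

Lemma eigenseq_spec k (M : 'M[R]_k) :
  size (eigenseq M) = k /\ forall z, eigenvalue_of M z = (z \in eigenseq M).
Proof.
rewrite /eigenseq /eigenvalue_of; case: closed_field_poly_normal => r /= cpE.
rewrite (monicP (char_poly_monic _)) scale1r in cpE.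
split; last by move=> z; rewrite cpE root_prod_XsubC.
by have := size_char_poly (cmx M); rewrite cpE size_prod_XsubC; case.
Qed.

Lemma hurwitz_stableE k (M : 'M[R]_k) :
  hurwitz_stable M <-> (inertia M).1.1 = k.
Proof.
have [sizeE memE] := eigenseq_spec M.
rewrite /inertia /= -[in RHS]sizeE (rwP eqP) -all_count.
split=> [stM | /allP stM z]; first by apply/allP => z; rewrite -memE; apply: stM.
by rewrite memE; apply: stM.
Qed.

Lemma inertia_hurwitz_stable k (M N : 'M[R]_k) :
  inertia M = inertia N -> hurwitz_stable M -> hurwitz_stable N.
Proof. by move=> MN /hurwitz_stableE stM; apply/hurwitz_stableE; rewrite -MN. Qed.

Lemma hurwitz_char_poly_gt0 k (M : 'M[R]_k) x :
  hurwitz_stable M -> 0 <= x -> 0 < (char_poly M).[x].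
Proof.
move=> stM x_ge0.
have no_root : {in `[0, +oo[, forall y, ~~ root (char_poly M) y}.
  move=> y; rewrite in_itv /= andbT => y_ge0; apply/negP => /rootP cpy0.
  have : eigenvalue_of M (y%:C)%C.
    by rewrite /eigenvalue_of /cmx -map_char_poly rootE horner_map /= cpy0 rmorph0.
  by move/stM; rewrite -complexRe ltcE /= ltNge y_ge0 andbF.
have := sgp_pinftyP no_root; rewrite /sgp_pinfty (monicP (char_poly_monic _)) sgr1.
by move=> /(_ x); rewrite in_itv /= andbT x_ge0 => /(_ isT) /eqP; rewrite sgr_cp0.
Qed.

Lemma hurwitz_stable_unitmx k (M : 'M[R]_k) : hurwitz_stable M -> M \in unitmx.
Proof.
move=> /hurwitz_char_poly_gt0 /(_ (lexx 0)).
rewrite unitmxE unitfE horner_coef0 char_poly_det.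
by apply: contraTneq => ->; rewrite mulr0 ltxx.
Qed.

Lemma not_P0minus_char_poly k (M : 'M[R]_k) :
  ~ P0minus M -> exists alpha, (char_poly (psubmx M alpha)).[0] < 0.
Proof.
move=> notP0; apply: NNPP => noalpha; apply: notP0 => alpha det_neq0.
apply/eqP/negPn/negP => sg_neq; apply: noalpha; exists alpha.
by rewrite horner_coef0 char_poly_det signr_mulr_lt0.
Qed.

End Eigenvalues.

Section ColumnScaling.
Variables (R : rcfType) (k : nat).
Implicit Types (M : 'M[R]_k) (S : {set 'I_k}).

Definition scale_off S (e : R) : 'M[R]_k := diag_mx (\row_j if j \in S then 1 else e).

Lemma scale_off1 S : scale_off S 1 = 1.
Proof. by apply/matrixP => i j; rewrite !mxE if_same. Qed.

Lemma pos_diag_scale_off S e : 0 < e -> pos_diag (scale_off S e).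
Proof. by move=> e_gt0; eexists; split=> // j; rewrite mxE; case: ifP. Qed.

Lemma det_scalar_off_psubmx M S (c : R) :
  (forall i j, j \notin S -> M i j = (i == j)%:R * c) ->
  \det M = c ^+ #|~: S| * \det (psubmx M S).
Proof.
move=> M_off.
pose f (i : 'I_(#|S| + #|~: S|)) : 'I_k :=
  match split i with inl a => enum_val a | inr b => enum_val b end.
have card_k : (#|S| + #|~: S|)%N = k by rewrite cardsC card_ord.
have f_inj : injective f.
  move=> i j; rewrite /f => fij; apply: (can_inj splitK); move: fij.
  case: (split i) => a; case: (split j) => b; try by move/enum_val_inj ->.
    by move=> ab; have := enum_valP b; rewrite -ab inE (enum_valP a).
  by move=> ab; have := enum_valP a; rewrite ab inE (enum_valP b).
rewrite -(det_mxsub_perm card_k f_inj).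
have -> : mxsub f f M = block_mx (psubmx M S) 0
    (\matrix_(i, j) M (enum_val i) (enum_val j)) c%:M.
  apply/matrixP => i j; rewrite mxE -(splitK i) -(splitK j).
  case: (split i) => a; case: (split j) => b; rewrite /f !unsplitK /=.
  - by rewrite block_mxEul mxE.
  - rewrite block_mxEur mxE M_off; last by have := enum_valP b; rewrite inE.
    case: eqP => [ab|]; last by rewrite mul0r.
    by have := enum_valP b; rewrite -ab inE (enum_valP a).
  - by rewrite block_mxEdl mxE.
  - rewrite block_mxEdr mxE M_off; last by have := enum_valP b; rewrite inE.
    by rewrite (inj_eq enum_val_inj) mulr_natl.
by rewrite det_lblock det_scalar mulrC.
Qed.

Lemma det_shift_scale_off0 M S (x : R) :
  \det (x%:M - M *m scale_off S 0) = x ^+ #|~: S| * (char_poly (psubmx M S)).[x].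
Proof.
rewrite (@det_scalar_off_psubmx _ S x) => [|i j jS]; last first.
  by rewrite mul_mx_diag !mxE (negbTE jS) mulr0 subr0 mulr_natl.
rewrite horner_char_poly; congr (_ * \det _); apply/matrixP => i j.
by rewrite /psubmx mul_mx_diag !mxE (enum_valP j) (inj_eq enum_val_inj) mulr1.
Qed.

Lemma det_shift_scale_off_poly M S (x : R) :
  exists p : {poly R}, forall e, p.[e] = \det (x%:M - M *m scale_off S e).
Proof.
exists (\det (\matrix_(i, j)
  ((x *+ (i == j))%:P - (M i j)%:P * (if j \in S then 1 else 'X)))) => e.
rewrite horner_det; congr (\det _); apply/matrixP => i j.
rewrite mul_mx_diag !mxE horner_evalE hornerD hornerN hornerM !hornerC.
by case: (j \in S); rewrite ?hornerC ?hornerX mulrC.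
Qed.

Lemma scale_off_destabilizes M S :
  (char_poly (psubmx M S)).[0] < 0 ->
  exists2 e, 0 < e & ~ hurwitz_stable (M *m scale_off S e).
Proof.
move=> /poly_lt0_right [x x_gt0 cpx_lt0].
have [p pE] := det_shift_scale_off_poly M S x.
have p0_lt0 : p.[0] < 0.
  by rewrite pE det_shift_scale_off0 pmulr_rlt0 // exprn_gt0.
have [e e_gt0 pe_lt0] := poly_lt0_right p0_lt0.
exists e => // /hurwitz_char_poly_gt0 /(_ (ltW x_gt0)).
by rewrite horner_char_poly -pE => /(lt_trans pe_lt0); rewrite ltxx.
Qed.

End ColumnScaling.

Theorem mainTheorem5 (R : rcfType) (n : nat) (A : 'M[R]_n) :
  (exists kappa : {set 'I_n},
      hurwitz_stable (psubmx A kappa) /\ ~ P0minus (psubmx A kappa)) ->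
  D_Hopf A.
Proof.
move=> [kappa [stB /not_P0minus_char_poly [alpha cp0_lt0]]].
have [e e_gt0 unstable] := scale_off_destabilizes cp0_lt0.
exists kappa; split; first exact: hurwitz_stable_unitmx.
exists (scale_off alpha 1), (scale_off alpha e).
split; first exact: pos_diag_scale_off.
split; first exact: pos_diag_scale_off.
by rewrite scale_off1 mulmx1 => /inertia_hurwitz_stable /(_ stB).
Qed.
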